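(* Let $\pi\in S_n$ and ${\bf m}\in\mathrm{GL}_n(k)$. (1) If $\pi\in\mathcal P_{\bf q}$, then ${\bf r}_\pi\in M(\mathcal{O}_{\bf q}(k^{n}))$. (2) If ${\bf m}\in M(\mathcal{O}_{\bf q}(k^{n}))$, then $\mathrm{Skel}({\bf m})\subseteq\mathcal P_{\bf q}$.
   Context: Let $k$ be a field, $n\ge1$, and ${\bf q}=(q_{ij})\in\mathcal M_n(k)$ with $q_{ij}q_{ji}=1$, $q_{ii}=1$ for all $i,j$. $\mathcal{O}_{\bf q}(k^{n})=k\langle x_1,\dots,x_n\rangle/\langle x_jx_i-q_{ij}x_ix_j\rangle$, graded with $\deg x_i=1$. $M(\mathcal{O}_{\bf q}(k^{n}))$ is the set of $A=(a_{ij})\in \mathrm{GL}_n(k)$ such that $x_i\mapsto \sum_j a_{ji}x_j$ extends to a graded algebra automorphism of $\mathcal{O}_{\bf q}(k^{n})$ (a subgroup of $\mathrm{GL}_n(k)$). The set of compatible permutations is $\mathcal P_{\bf q}=\{\pi\in S_n: q_{\pi(i)\pi(j)}=q_{ij}\ \forall\,1\le i,j\le n\}$, a subgroup of $S_n$. For $\pi\in S_n$, ${\bf r}_\pi=(r_{ij})$ is the permutation matrix with $r_{ij}=1$ if $i=\pi(j)$ and $r_{ij}=0$ otherwise. For ${\bf m}=(m_{ij})\in\mathrm{GL}_n(k)$, $\mathrm{Skel}({\bf m})=\{\pi\in S_n: m_{\pi(i)i}\neq0\ \forall\,1\le i\le n\}$ (nonempty since $\det{\bf m}\ne0$). *)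

From HB Require Import structures.
From mathcomp Require Import all_boot all_order all_algebra all_fingroup.
Set Implicit Arguments. Unset Strict Implicit. Unset Printing Implicit Defensive.
Import GRing.Theory.
Local Open Scope ring_scope.

(* Noncommutative polynomials k<x_1,...,x_n>: coefficient functions on words
   (seq 'I_n) with finite support (bounded length, alphabet finite). *)
Section QuantumAffineSpace.
Variables (k : fieldType) (n : nat) (q : 'M[k]_n).

Definition ncp := seq 'I_n -> k.
Definition ncpoly (f : ncp) : Prop := exists N : nat, forall w, (N <= size w)%N -> f w = 0.
Definition nc_homog (d : nat) (f : ncp) : Prop := forall w, size w != d -> f w = 0.

Definition nc0 : ncp := fun _ => 0.
Definition nc1 : ncp := fun w => (w == [::])%:R.
Definition ncvar (i : 'I_n) : ncp := fun w => (w == [:: i])%:R.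
Definition ncadd (f g : ncp) : ncp := fun w => f w + g w.
Definition ncsub (f g : ncp) : ncp := fun w => f w - g w.
Definition ncscale (c : k) (f : ncp) : ncp := fun w => c * f w.
Definition ncmul (f g : ncp) : ncp :=
  fun w => \sum_(i < (size w).+1) f (take i w) * g (drop i w).

Definition qrel (i j : 'I_n) : ncp :=
  ncsub (ncmul (ncvar j) (ncvar i)) (ncscale (q i j) (ncmul (ncvar i) (ncvar j))).

Inductive qideal : ncp -> Prop :=
| qideal0 : qideal nc0
| qidealD f g : qideal f -> qideal g -> qideal (ncadd f g)
| qidealG a b i j : ncpoly a -> ncpoly b -> qideal (ncmul (ncmul a (qrel i j)) b).

(* equality in O_q(k^n) = k<x>/I of the classes of f and g *)
Definition qeq (f g : ncp) : Prop := qideal (ncsub f g).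

(* psi, acting on representatives, induces a graded k-algebra automorphism
   of O_q(k^n) sending x_i to sum_j a_ji x_j. *)
Record qgraded_aut (A : 'M[k]_n) (psi : ncp -> ncp) : Prop := {
  qa_poly : forall f, ncpoly f -> ncpoly (psi f);
  qa_wd : forall f g, ncpoly f -> ncpoly g -> qeq f g -> qeq (psi f) (psi g);
  qa_add : forall f g, ncpoly f -> ncpoly g -> qeq (psi (ncadd f g)) (ncadd (psi f) (psi g));
  qa_scale : forall c f, ncpoly f -> qeq (psi (ncscale c f)) (ncscale c (psi f));
  qa_mul : forall f g, ncpoly f -> ncpoly g -> qeq (psi (ncmul f g)) (ncmul (psi f) (psi g));
  qa_one : qeq (psi nc1) nc1;
  qa_gen : forall i, qeq (psi (ncvar i)) (fun w => \sum_(j < n) A j i * ncvar j w);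
  qa_inj : forall f g, ncpoly f -> ncpoly g -> qeq (psi f) (psi g) -> qeq f g;
  qa_surj : forall g, ncpoly g -> exists2 f, ncpoly f & qeq (psi f) g;
  qa_graded : forall d f, ncpoly f -> nc_homog d f ->
                exists2 g, nc_homog d g & qeq (psi f) g
}.

Definition MO (A : 'M[k]_n) : Prop :=
  A \in unitmx /\ exists psi, qgraded_aut A psi.

Definition Pq : {set 'S_n} :=
  [set p : 'S_n | [forall i, forall j, q (p i) (p j) == q i j]].

End QuantumAffineSpace.

Definition rperm (k : fieldType) (n : nat) (p : 'S_n) : 'M[k]_n :=
  \matrix_(i, j) (i == p j)%:R.

Definition Skel (k : fieldType) (n : nat) (m : 'M[k]_n) : {set 'S_n} :=
  [set p : 'S_n | [forall i, m (p i) i != 0]].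

(* Part (1): relabelling the letters of words by a compatible permutation maps
   every defining relation to a defining relation, so it preserves the ideal and
   induces the automorphism x_i |-> x_(pi i).

   Part (2): coefficients of words of length at most 2 see only the quadratic
   part of the ideal.  The linear forms f |-> f[a;a] and f |-> f[a;b] + q_ab f[b;a]
   vanish on the ideal, so applying them to the image of x_j x_i - q_ij x_i x_j
   gives, for every a, b,
     m_aj m_ai (1 - q_ij) = 0   and
     (1 - q_ij q_ab) m_aj m_bi = (q_ij - q_ab) m_ai m_bj.
   If pi is in the skeleton of m and a = pi i, b = pi j with q_ab <> q_ij, these
   force q_ij = 1 and make rows a and b of m proportional, contradicting
   invertibility. *)
From mathcomp Require Import all_boot all_order all_algebra all_fingroup.
From Stdlib Require Import FunctionalExtensionality.
From mathcomp Require Import zify ring.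
Set Implicit Arguments. Unset Strict Implicit. Unset Printing Implicit Defensive.
Import GRing.Theory.
Local Open Scope ring_scope.

Lemma unitmx_proportional_rows (R : fieldType) (n : nat) (A : 'M[R]_n) a b i :
  A \in unitmx -> a != b -> (forall c, A a c * A b i = A a i * A b c) -> A a i = 0.
Proof.
move=> Aunit nab prop_ab.
pose r : 'rV[R]_n := A a i *: 'e_b - A b i *: 'e_a.
have rA0 : r *m A = 0.
  apply/rowP => c; rewrite mulmxBl -!scalemxAl -!rowE !mxE.
  by rewrite -prop_ab mulrC subrr.
have : r 0 b = 0 by rewrite -(mulmxK Aunit r) rA0 mul0mx mxE.
by rewrite !mxE !eqxx eq_sym (negbTE nab) mulr1 mulr0 subr0.
Qed.

Section NoncommutativePolynomials.
Variables (k : fieldType) (n : nat).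
Implicit Types (f g a b r : ncp k n) (i j x y z : 'I_n).

Lemma ncmul_nil f g : ncmul f g [::] = f [::] * g [::].
Proof. by rewrite /ncmul big_ord_recl big_ord0 addr0. Qed.

Lemma ncmul_seq1 f g z : ncmul f g [:: z] = f [::] * g [:: z] + f [:: z] * g [::].
Proof. by rewrite /ncmul !big_ord_recl big_ord0 addr0. Qed.

Lemma ncmul_seq2 f g x y :
  ncmul f g [:: x; y] = f [::] * g [:: x; y] + f [:: x] * g [:: y] + f [:: x; y] * g [::].
Proof. by rewrite /ncmul !big_ord_recl big_ord0 addr0 addrA. Qed.

Lemma ncvar_nil i : ncvar k i [::] = 0.
Proof. by []. Qed.

Lemma ncvar_seq1 i z : ncvar k i [:: z] = (z == i)%:R.
Proof. by rewrite /ncvar eqseq_cons andbT. Qed.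

Lemma ncvar_seq2 i x y : ncvar k i [:: x; y] = 0.
Proof. by rewrite /ncvar eqseq_cons andbF. Qed.

Lemma ncscale0 f : ncscale 0 f = @nc0 k n.
Proof. by apply: functional_extensionality => w; rewrite /ncscale mul0r. Qed.

Lemma ncsubE f g : ncsub f g = ncadd f (ncscale (-1) g).
Proof. by apply: functional_extensionality => w; rewrite /ncsub /ncadd /ncscale mulN1r. Qed.

Lemma ncmul1l f : ncmul (@nc1 k n) f = f.
Proof.
apply: functional_extensionality => w.
rewrite /ncmul big_ord_recl /nc1 take0 drop0 eqxx mul1r big1 ?addr0 // => i _.
by rewrite -size_eq0 size_takel ?mul0r // ltn_ord.
Qed.

Lemma ncmul1r f : ncmul f (@nc1 k n) = f.
Proof.
apply: functional_extensionality => w.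
rewrite /ncmul big_ord_recr /= /nc1 drop_size take_size eqxx mulr1 big1 ?add0r // => i _.
by rewrite -size_eq0 size_drop subn_eq0 leqNgt ltn_ord mulr0.
Qed.

Lemma ncpoly0 : ncpoly (@nc0 k n).
Proof. by exists 0%N. Qed.

Lemma ncpoly1 : ncpoly (@nc1 k n).
Proof. by exists 1%N => -[]. Qed.

Lemma ncpoly_var i : ncpoly (ncvar k i).
Proof. by exists 2%N => -[|x [|y w]] // _; rewrite /ncvar eqseq_cons andbF. Qed.

Lemma ncpoly_scale c f : ncpoly f -> ncpoly (ncscale c f).
Proof. by case=> N fN; exists N => w hw; rewrite /ncscale fN // mulr0. Qed.

Lemma ncpoly_mul f g : ncpoly f -> ncpoly g -> ncpoly (ncmul f g).
Proof.
move=> [N1 fN1] [N2 gN2]; exists (N1 + N2)%N => w hw.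
rewrite /ncmul big1 // => i _.
have le_iw : (i <= size w)%N by rewrite -ltnS ltn_ord.
case: (leqP N1 i) => hN; first by rewrite fN1 ?mul0r // size_takel.
by rewrite gN2 ?mulr0 // size_drop; lia.
Qed.

(* Since [r] has no constant or linear part, only the constant terms of the
   outer factors reach words of length at most 2. *)
Lemma ncmul_sandwich_low a r b w :
  r [::] = 0 -> (forall z, r [:: z] = 0) -> (size w <= 2)%N ->
  ncmul (ncmul a r) b w = a [::] * r w * b [::].
Proof.
move=> r0 r1; case: w => [|x [|y [|? ?]]] // _.
- by rewrite !ncmul_nil r0 mulr0 !mul0r.
- by rewrite ncmul_seq1 ncmul_nil ncmul_seq1 r0 r1; ring.
- by rewrite ncmul_seq2 ncmul_nil ncmul_seq1 ncmul_seq2 r0 !r1; ring.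
Qed.

Definition ncrelabel (p : 'S_n) f : ncp k n := fun w => f (map (p^-1)%g w).

Lemma ncrelabel_mul p f g : ncrelabel p (ncmul f g) = ncmul (ncrelabel p f) (ncrelabel p g).
Proof.
apply: functional_extensionality => w; rewrite /ncrelabel /ncmul size_map.
by apply: eq_bigr => i _; rewrite map_take map_drop.
Qed.

Lemma ncrelabel_var p i : ncrelabel p (ncvar k i) = ncvar k (p i).
Proof.
apply: functional_extensionality => -[|x [|y w]] //; rewrite /ncrelabel /=.
  by rewrite !ncvar_seq1 -(inj_eq (@perm_inj _ p)) permKV.
by rewrite /ncvar !eqseq_cons !andbF.
Qed.

Lemma ncrelabelK p f : ncrelabel (p^-1)%g (ncrelabel p f) = f.
Proof.
apply: functional_extensionality => w; rewrite /ncrelabel -map_comp invgK.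
by rewrite (eq_map (permK p)) map_id.
Qed.

Lemma ncpoly_relabel p f : ncpoly f -> ncpoly (ncrelabel p f).
Proof. by case=> N fN; exists N => w hw; rewrite /ncrelabel fN // size_map. Qed.

End NoncommutativePolynomials.

Section QuantumAffineSpace.
Variables (k : fieldType) (n : nat) (q : 'M[k]_n).
Implicit Types (f g a b h : ncp k n) (i j x y z : 'I_n) (p : 'S_n).

Lemma qeq_refl f : qeq q f f.
Proof.
rewrite /qeq (_ : ncsub f f = @nc0 k n); first exact: qideal0.
by apply: functional_extensionality => w; rewrite /ncsub subrr.
Qed.

Lemma ncpoly_qrel i j : ncpoly (qrel q i j).
Proof.
have [N1 hN1] := ncpoly_mul (ncpoly_var k j) (ncpoly_var k i).
have [N2 hN2] := ncpoly_mul (ncpoly_var k i) (ncpoly_var k j).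
exists (N1 + N2)%N => w hw.
by rewrite /qrel /ncsub /ncscale hN1 ?hN2 ?mulr0 ?subr0 //; lia.
Qed.

Lemma qrelE i j : qrel q i j =
  ncadd (ncmul (ncvar k j) (ncvar k i)) (ncscale (- q i j) (ncmul (ncvar k i) (ncvar k j))).
Proof.
by apply: functional_extensionality => w; rewrite /qrel /ncsub /ncadd /ncscale mulNr.
Qed.

Lemma qrel_qeq0 i j : qeq q (qrel q i j) (@nc0 k n).
Proof.
rewrite /qeq (_ : ncsub _ _ = ncmul (ncmul (@nc1 k n) (qrel q i j)) (@nc1 k n)).
  by apply: qidealG; apply: ncpoly1.
rewrite ncmul1l ncmul1r; apply: functional_extensionality => w.
by rewrite /ncsub /nc0 subr0.
Qed.

Lemma qrel_nil i j : qrel q i j [::] = 0.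
Proof. by rewrite /qrel /ncsub /ncscale !ncmul_nil mul0r mulr0 subr0. Qed.

Lemma qrel_seq1 i j z : qrel q i j [:: z] = 0.
Proof. by rewrite /qrel /ncsub /ncscale !ncmul_seq1 !ncvar_nil; ring. Qed.

Lemma qrel_seq2 i j x y :
  qrel q i j [:: x; y] = (x == j)%:R * (y == i)%:R - q i j * ((x == i)%:R * (y == j)%:R).
Proof.
rewrite /qrel /ncsub /ncscale !ncmul_seq2 !ncvar_nil !ncvar_seq2 !ncvar_seq1.
by rewrite !mul0r ?mulr0 !add0r !addr0.
Qed.

Lemma ncrelabel_qrel p i j : p \in Pq q -> ncrelabel p (qrel q i j) = qrel q (p i) (p j).
Proof.
rewrite inE => /forallP /(_ i) /forallP /(_ j) /eqP qp.
by rewrite /qrel qp -!ncrelabel_var -!ncrelabel_mul.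
Qed.

Lemma ncrelabel_qideal p h : p \in Pq q -> qideal q h -> qideal q (ncrelabel p h).
Proof.
move=> pPq; elim=> [|f g _ hf _ hg|a b i j pa pb].
- exact: qideal0.
- exact: qidealD hf hg.
- rewrite !ncrelabel_mul ncrelabel_qrel //.
  by apply: qidealG; apply: ncpoly_relabel.
Qed.

Lemma Pq_invg p : p \in Pq q -> (p^-1)%g \in Pq q.
Proof.
rewrite !inE => /forallP pPq; apply/forallP => i; apply/forallP => j.
by have /forallP /(_ (p^-1 j)%g) /eqP := pPq (p^-1 i)%g; rewrite !permKV => ->.
Qed.

Lemma rperm_unitmx p : rperm k p \in unitmx.
Proof.
rewrite (_ : rperm k p = (perm_mx p)^T) ?unitmx_tr ?unitmx_perm //.
by apply/matrixP => i j; rewrite !mxE eq_sym.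
Qed.

Lemma rperm_gen p i : (fun w => \sum_(j < n) rperm k p j i * ncvar k j w) = ncvar k (p i).
Proof.
apply: functional_extensionality => w.
rewrite (bigD1 (p i)) //= !mxE eqxx mul1r big1 ?addr0 // => j pij.
by rewrite !mxE (negbTE pij) mul0r.
Qed.

Lemma rperm_MO p : p \in Pq q -> MO q (rperm k p).
Proof.
move=> pPq; split; first exact: rperm_unitmx.
have pinvPq := Pq_invg pPq.
exists (ncrelabel p); split.
- by move=> f; apply: ncpoly_relabel.
- by move=> f g _ _; apply: ncrelabel_qideal.
- by move=> *; apply: qeq_refl.
- by move=> *; apply: qeq_refl.
- by move=> *; rewrite ncrelabel_mul; apply: qeq_refl.
- rewrite (_ : ncrelabel p (@nc1 k n) = @nc1 k n); first exact: qeq_refl.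
  by apply: functional_extensionality => -[].
- by move=> i; rewrite ncrelabel_var rperm_gen; apply: qeq_refl.
- move=> f g _ _ /(ncrelabel_qideal pinvPq).
  by rewrite /qeq -[in X in _ -> X](ncrelabelK p f) -[in X in _ -> X](ncrelabelK p g).
- move=> g pg; exists (ncrelabel (p^-1)%g g); first exact: ncpoly_relabel.
  by rewrite -{2}(ncrelabelK (p^-1)%g g) invgK; apply: qeq_refl.
- move=> d f _ hf; exists (ncrelabel p f); last exact: qeq_refl.
  by move=> w hw; rewrite /ncrelabel hf // size_map.
Qed.

Definition qannihilator (F : ncp k n -> k) : Prop :=
  [/\ forall f g, F (ncadd f g) = F f + F g,
      forall c f, F (ncscale c f) = c * F f &
      forall a b i j, ncpoly a -> ncpoly b -> F (ncmul (ncmul a (qrel q i j)) b) = 0].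

Lemma qannihilator_qideal F h : qannihilator F -> qideal q h -> F h = 0.
Proof.
case=> FD FZ Frel; elim=> [|f g _ Ff _ Fg|]; last exact: Frel.
- by rewrite -(ncscale0 (@nc0 k n)) FZ mul0r.
- by rewrite FD Ff Fg addr0.
Qed.

Lemma qannihilator_qeq F f g : qannihilator F -> qeq q f g -> F f = F g.
Proof.
move=> Fq /(qannihilator_qideal Fq); case: Fq => FD FZ _.
by rewrite ncsubE FD FZ mulN1r => /eqP; rewrite subr_eq0 => /eqP.
Qed.

Lemma qannihilator_aut_qrel m psi F i j : qgraded_aut q m psi -> qannihilator F ->
  F (ncmul (psi (ncvar k j)) (psi (ncvar k i))) =
  q i j * F (ncmul (psi (ncvar k i)) (psi (ncvar k j))).
Proof.
case=> _ psi_wd psiD psiZ psiM _ _ _ _ _ Fq; have [FD FZ _] := Fq.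
have psi0 : F (psi (@nc0 k n)) = 0.
  rewrite -(ncscale0 (@nc0 k n)) (qannihilator_qeq Fq (psiZ _ _ (ncpoly0 k n))).
  by rewrite FZ mul0r.
have pX x y : ncpoly (ncmul (ncvar k x) (ncvar k y)).
  exact: ncpoly_mul (ncpoly_var k x) (ncpoly_var k y).
have := qannihilator_qeq Fq (psi_wd _ _ (ncpoly_qrel i j) (ncpoly0 k n) (qrel_qeq0 i j)).
rewrite psi0 qrelE.
rewrite (qannihilator_qeq Fq (psiD _ _ (pX _ _) (ncpoly_scale _ (pX _ _)))) FD.
rewrite (qannihilator_qeq Fq (psiZ _ _ (pX _ _))) FZ.
rewrite !(qannihilator_qeq Fq (psiM _ _ (ncpoly_var k _) (ncpoly_var k _))).
by rewrite mulNr => /eqP; rewrite subr_eq0 => /eqP.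
Qed.

Lemma qannihilator_nil : qannihilator (fun f => f [::]).
Proof.
split=> // a b i j _ _.
by rewrite ncmul_sandwich_low ?qrel_nil ?mulr0 ?mul0r //; apply: qrel_seq1.
Qed.

Lemma qannihilator_seq1 z : qannihilator (fun f => f [:: z]).
Proof.
split=> // a b i j _ _.
by rewrite ncmul_sandwich_low ?qrel_seq1 ?mulr0 ?mul0r //; [apply: qrel_nil | apply: qrel_seq1].
Qed.

Hypothesis q_diag : forall i, q i i = 1.

Lemma qrel_diag i j x : qrel q i j [:: x; x] = 0.
Proof.
rewrite qrel_seq2; transitivity ((x == j)%:R * (x == i)%:R * (1 - q i j) : k); first ring.
have [->|_] := eqVneq x j; last by rewrite mulr0n !mul0r.
by have [->|_] := eqVneq j i; rewrite ?q_diag ?subrr ?mulr0 ?mulr0n ?mul0r.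
Qed.

Lemma qannihilator_diag x : qannihilator (fun f => f [:: x; x]).
Proof.
split=> // a b i j _ _.
rewrite ncmul_sandwich_low ?qrel_diag ?mulr0 ?mul0r //; [exact: qrel_nil | exact: qrel_seq1].
Qed.

Hypothesis q_skew : forall i j, q i j * q j i = 1.

Lemma qrel_skew i j x y : qrel q i j [:: x; y] + q x y * qrel q i j [:: y; x] = 0.
Proof.
transitivity ((x == j)%:R * (y == i)%:R * (1 - q x y * q i j) +
              (x == i)%:R * (y == j)%:R * (q x y - q i j) : k).
  by rewrite !qrel_seq2; ring.
have -> : (x == j)%:R * (y == i)%:R * (1 - q x y * q i j) = 0 :> k.
  have [->|_] := eqVneq x j; last by rewrite mulr0n !mul0r.
  by have [->|_] := eqVneq y i; rewrite ?q_skew ?subrr ?mulr0 ?mulr0n ?mul0r.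
have [->|_] := eqVneq x i; last by rewrite mulr0n !mul0r addr0.
by have [->|_] := eqVneq y j; rewrite ?subrr ?mulr0 ?mulr0n ?mul0r ?addr0.
Qed.

Lemma qannihilator_skew x y : qannihilator (fun f => f [:: x; y] + q x y * f [:: y; x]).
Proof.
split=> [f g|c f|a b i j _ _]; rewrite /ncadd /ncscale; try ring.
have r0 := qrel_nil i j; have r1 := qrel_seq1 i j.
rewrite !ncmul_sandwich_low //.
transitivity (a [::] * (qrel q i j [:: x; y] + q x y * qrel q i j [:: y; x]) * b [::]).
  by ring.
by rewrite qrel_skew mulr0 mul0r.
Qed.

Section GradedAutomorphism.
Variables (m : 'M[k]_n) (psi : ncp k n -> ncp k n).
Hypothesis psi_aut : qgraded_aut q m psi.

Lemma aut_var_nil i : psi (ncvar k i) [::] = 0.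
Proof.
rewrite (qannihilator_qeq qannihilator_nil (qa_gen psi_aut i)) big1 // => j _.
by rewrite ncvar_nil mulr0.
Qed.

Lemma aut_var_seq1 i z : psi (ncvar k i) [:: z] = m z i.
Proof.
rewrite (qannihilator_qeq (qannihilator_seq1 z) (qa_gen psi_aut i)) (bigD1 z) //=.
rewrite ncvar_seq1 eqxx mulr1 big1 ?addr0 // => j zj.
by rewrite ncvar_seq1 eq_sym (negbTE zj) mulr0.
Qed.

Lemma aut_ncmul_seq2 i j x y :
  ncmul (psi (ncvar k i)) (psi (ncvar k j)) [:: x; y] = m x i * m y j.
Proof. by rewrite ncmul_seq2 !aut_var_nil !aut_var_seq1 mul0r mulr0 add0r addr0. Qed.

Lemma aut_rel_diag i j (a : 'I_n) : m a j * m a i = q i j * (m a i * m a j).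
Proof.
have := qannihilator_aut_qrel i j psi_aut (qannihilator_diag a).
by rewrite !aut_ncmul_seq2.
Qed.

Lemma aut_rel_skew i j (a b : 'I_n) :
  m a j * m b i + q a b * (m b j * m a i) = q i j * (m a i * m b j + q a b * (m b i * m a j)).
Proof.
have := qannihilator_aut_qrel i j psi_aut (qannihilator_skew a b).
by rewrite !aut_ncmul_seq2.
Qed.

End GradedAutomorphism.

End QuantumAffineSpace.

Section Skeleton.
Variables (k : fieldType) (n : nat) (q m : 'M[k]_n).
Hypothesis q_diag : forall i, q i i = 1.
Hypothesis m_unit : m \in unitmx.
Hypothesis rel_diag : forall i j a, m a j * m a i = q i j * (m a i * m a j).
Hypothesis rel_skew : forall i j a b,
  m a j * m b i + q a b * (m b j * m a i) = q i j * (m a i * m b j + q a b * (m b i * m a j)).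

Lemma q_eq1_of_row a i j : m a i != 0 -> m a j != 0 -> q i j = 1.
Proof.
move=> ai aj; have /eqP := rel_diag i j a.
rewrite -subr_eq0 (_ : _ - _ = (1 - q i j) * (m a i * m a j)); last by ring.
by rewrite !mulf_eq0 (negbTE ai) (negbTE aj) !orbF subr_eq0 => /eqP <-.
Qed.

Lemma rel_skew_factor i j a b :
  (1 - q i j * q a b) * (m a j * m b i) = (q i j - q a b) * (m a i * m b j).
Proof.
have /eqP := rel_skew i j a b; rewrite -subr_eq0 => /eqP skew0.
by apply/eqP; rewrite -subr_eq0 -skew0; apply/eqP; ring.
Qed.

Lemma rows_proportional i a b :
  m a i != 0 -> m b i != 0 -> q a b != 1 -> forall c, m a c * m b i = m a i * m b c.
Proof.
move=> ai bi qab1 c.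
have [ac0|ac] := eqVneq (m a c) 0; have [bc0|bc] := eqVneq (m b c) 0;
  first by rewrite ac0 bc0 mul0r mulr0.
all: have qic : q i c = 1 by [apply: q_eq1_of_row ai _ | apply: q_eq1_of_row bi _].
all: have := rel_skew_factor i c a b; rewrite qic mul1r => /mulfI; apply.
all: by rewrite subr_eq0 eq_sym.
Qed.

Lemma Skel_sub_Pq : Skel m \subset Pq q.
Proof.
apply/subsetP => p; rewrite !inE => /forallP skel_p.
apply/forallP => i; apply/forallP => j; apply/eqP.
have [<-|nij] := eqVneq i j; first by rewrite !q_diag.
have nab : p i != p j by rewrite (inj_eq perm_inj).
move: (skel_p i) (skel_p j) (rel_skew_factor i j (p i) (p j)).
set a := p i; set b := p j => ai bj fact_ij.
apply/eqP; apply: contraT => qab; rewrite eq_sym -subr_eq0 in qab.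
have : (1 - q i j * q a b) * (m a j * m b i) != 0.
  by rewrite fact_ij !mulf_neq0.
rewrite !mulf_eq0 negb_or => /andP [_ /norP [aj bi]].
have qij1 : q i j = 1 by apply: q_eq1_of_row ai aj.
have qab1 : q a b != 1 by move: qab; rewrite qij1 subr_eq0 eq_sym.
have ai0 := unitmx_proportional_rows m_unit nab (rows_proportional ai bi qab1).
by rewrite ai0 eqxx in ai.
Qed.

End Skeleton.

Theorem lemma3p4 (k : fieldType) (n : nat) (q : 'M[k]_n)
  (hn : (1 <= n)%N)
  (hq : forall i j, q i j * q j i = 1) (hqd : forall i, q i i = 1)
  (p : 'S_n) (m : 'M[k]_n) (hm : m \in unitmx) :
  (p \in Pq q -> MO q (rperm k p)) /\
  (MO q m -> Skel m \subset Pq q).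
Proof.
split; first exact: rperm_MO.
case=> _ [psi psi_aut].
apply: (Skel_sub_Pq hqd hm).
- exact: (aut_rel_diag hqd psi_aut).
- exact: (aut_rel_skew hq psi_aut).
Qed.
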